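(* For $n\ge1$ let $R_n(t)=\sum_{T'\in\mathcal{T}'_n}t^{\operatorname{cdes}(T')-1}$. Then $$\sum_{n\ge1}R_n(t)\frac{z^n}{n!}=z\,\overline{Q}(t,z),$$ where $\overline{Q}(t,z)=\sum_{n\ge0}\overline{Q}_n(t)\frac{z^n}{n!}$ and $\overline{Q}_n(t)=\sum_{\pi}t^{\operatorname{des}(\pi)}$ over all quasi-Stirling permutations $\pi$ of size $n$.
   Context: $\mathcal{T}_n$ is the set of plane (ordered) rooted trees with $n$ edges labeled bijectively by $\{1,\dots,n\}$, and $\mathcal{T}'_n\subseteq\mathcal{T}_n$ is the subset of trees whose root has exactly one child. For a sequence $\pi_1\cdots\pi_r$: $i\in\{1,\dots,r\}$ is a descent if $\pi_i>\pi_{i+1}$ or $i=r$, and $\operatorname{des}$ counts descents; $\operatorname{cdes}(\pi_1\cdots\pi_r)=|\{i\in\{1,\dots,r\}:\pi_i>\pi_{i+1}\}|$ with $\pi_{r+1}=\pi_1$. For a vertex $v$ of a tree $T\in\mathcal{T}_n$ whose children edges have labels $a_1,\dots,a_d$ from left to right: if $v$ is not the root and its parent edge has label $\ell$, $\operatorname{cdes}(v)=\operatorname{cdes}(\ell a_1\cdots a_d)$; if $v$ is the root, $\operatorname{cdes}(v)=\operatorname{des}(a_1\cdots a_d)$; and $\operatorname{cdes}(T)=\sum_v\operatorname{cdes}(v)$. A quasi-Stirling permutation of size $n$ is a permutation $\pi_1\cdots\pi_{2n}$ of $\{1,1,\dots,n,n\}$ with no indices $i<j<k<\ell$ with $\pi_i=\pi_k$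 and $\pi_j=\pi_\ell$ (for $n=0$ only the empty sequence). *)

From Stdlib Require List.
From HB Require Import structures.
From mathcomp Require Import all_boot all_order all_algebra.
Set Implicit Arguments. Unset Strict Implicit. Unset Printing Implicit Defensive.
Import GRing.Theory.

(* Plane (ordered) rooted trees whose edges carry natural-number labels:
   a node is the ordered list of its children, each child given together
   with the label of the edge joining it to its parent. *)
Inductive ltree : Type := LNode : seq (nat * ltree) -> ltree.

Fixpoint labels (T : ltree) : seq nat :=
  let: LNode cs := T in
  (fix go (cs : seq (nat * ltree)) : seq nat :=
     match cs with
     | [::] => [::]
     | (l, c) :: cs' => l :: labels c ++ go cs'
     end) cs.

Definition inT (n : nat) (T : ltree) : Prop := perm_eq (labels T) (iota 1 n).

Definition inT' (n : nat) (T : ltree) : Prop :=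
  inT n T /\ exists l c, T = LNode [:: (l, c)].

(* des(π_1..π_r): i is a descent if π_i > π_{i+1} or i = r *)
Definition des (s : seq nat) : nat :=
  count (fun p : nat * nat => p.2 < p.1) (zip s (behead s)) + (0 < size s).

Definition cdes (s : seq nat) : nat :=
  count (fun p : nat * nat => p.2 < p.1) (zip s (rot 1 s)).

(* contribution of a non-root vertex with parent edge label l, plus all its
   descendants *)
Fixpoint cdes_sub (l : nat) (T : ltree) {struct T} : nat :=
  let: LNode cs := T in
  cdes (l :: map fst cs) +
  (fix go (cs : seq (nat * ltree)) : nat :=
     match cs with
     | [::] => 0
     | (l', c) :: cs' => cdes_sub l' c + go cs'
     end) cs.

(* cdes(T) = Σ_v cdes(v), the root contributing des of its children labels *)
Definition cdes_tree (T : ltree) : nat :=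
  let: LNode cs := T in
  des (map fst cs) + \sum_(p <- cs) cdes_sub p.1 p.2.

Definition quasi_stirling (m : nat) (p : seq nat) : Prop :=
  perm_eq p (flatten [seq [:: i; i] | i <- iota 1 m]) /\
  ~ exists i j k l : nat,
      [/\ i < j, j < k, k < l & l < size p] /\
      nth 0 p i = nth 0 p k /\ nth 0 p j = nth 0 p l.

Local Open Scope ring_scope.

Definition Rpoly (s : seq ltree) : {poly rat} :=
  \sum_(T <- s) 'X^(cdes_tree T - 1).

Definition Qpoly (q : seq (seq nat)) : {poly rat} :=
  \sum_(p <- q) 'X^(des p).

From Stdlib Require List.
From mathcomp Require Import all_boot all_algebra.
From mathcomp Require Import zify.
Import GRing.Theory.

(* A tree of T'_n is a root edge [l] above a subtree [c] whose edges carry the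
   labels [1..n] except [l].  Walking around [c] and writing each edge label
   when going down and again when coming back up gives its contour word: every
   label occurs twice and no two labels interleave as a..b..a..b, so it is a
   quasi-Stirling word, and [c] can be parsed back from it.  Shifting the values
   cyclically by [-l] maps the labels of [c] onto [1..n-1] and [l] to [n], so
   T' |-> (l, shifted contour word of c) is a bijection from T'_n onto
   [1..n] x QS_(n-1), whence R_n = n Q_(n-1).
   It carries cdes(T') - 1 to des: cdes(T') - 1 counts the cyclic descents of
   [l] followed by the contour word of [c]; a cyclic shift of the values does
   not change that number, and once the word starts with its maximum [n] its
   cyclic descents are the descents of the rest. *)

Set Implicit Arguments.
Unset Strict Implicit.

Section LtreeInd.
Variables (P : ltree -> Prop) (Pforest : seq (nat * ltree) -> Prop).
Hypotheses (Pforest_nil : Pforest [::])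
  (Pforest_cons : forall l c cs, P c -> Pforest cs -> Pforest ((l, c) :: cs))
  (P_node : forall cs, Pforest cs -> P (LNode cs)).

Fixpoint ltree_forest_ind (T : ltree) : P T :=
  match T with
  | LNode cs => P_node ((fix go (cs : seq (nat * ltree)) : Pforest cs :=
     match cs with
     | [::] => Pforest_nil
     | (l, c) :: cs' => Pforest_cons l (ltree_forest_ind c) (go cs')
     end) cs)
  end.
End LtreeInd.

Fixpoint contour (T : ltree) : seq nat :=
  let: LNode cs := T in
  (fix go (cs : seq (nat * ltree)) : seq nat :=
     match cs with
     | [::] => [::]
     | (l, c) :: cs' => l :: contour c ++ l :: go cs'
     end) cs.

Lemma labels_cons l c cs :
  labels (LNode ((l, c) :: cs)) = l :: labels c ++ labels (LNode cs).
Proof. by []. Qed.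

Lemma contour_cons l c cs :
  contour (LNode ((l, c) :: cs)) = l :: contour c ++ l :: contour (LNode cs).
Proof. by []. Qed.

Definition doubled (s : seq nat) : seq nat := flatten [seq [:: i; i] | i <- s].

Lemma count_doubled (p : pred nat) s : count p (doubled s) = 2 * count p s.
Proof. by elim: s => //= x s IH; rewrite IH; case: (p x) => /=; lia. Qed.

Lemma mem_doubled s : doubled s =i s.
Proof. by move=> x; rewrite -!has_pred1 !has_count count_doubled muln_gt0. Qed.

Lemma count_contour (p : pred nat) T : count p (contour T) = 2 * count p (labels T).
Proof.
move: T; apply: (@ltree_forest_ind (fun T => count p (contour T) = 2 * count p (labels T))
  (fun cs => count p (contour (LNode cs)) = 2 * count p (labels (LNode cs)))) => //.
move=> l c cs IHc IHcs; have count1 x s : count p (x :: s) = p x + count p s by [].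
by rewrite contour_cons labels_cons !(count1, count_cat) IHc IHcs; lia.
Qed.

Lemma mem_contour T : contour T =i labels T.
Proof. by move=> x; rewrite -!has_pred1 !has_count count_contour muln_gt0. Qed.

Fixpoint path_des (x : nat) (s : seq nat) : nat :=
  if s is y :: s' then (y < x) + path_des y s' else 0.

Lemma path_des_cat x s t : path_des x (s ++ t) = path_des x s + path_des (last x s) t.
Proof. by elim: s x => [|y s IH] x //=; rewrite IH addnA. Qed.

Lemma count_descents_zip x s t : size t <= 1 ->
  count (fun p : nat * nat => p.2 < p.1) (zip (x :: s) (s ++ t)) = path_des x (s ++ t).
Proof. by elim: s x => [|y s IH] x /=; [case: t => [|z []] | move=> /IH ->]. Qed.

Lemma des_cons x s : des (x :: s) = (path_des x s).+1.
Proof. by rewrite /des /= -{2 3}[s]cats0 count_descents_zip ?addn1. Qed.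

Lemma cdes_cons x s : cdes (x :: s) = path_des x (rcons s x).
Proof. by rewrite /cdes rot1_cons -cats1 count_descents_zip. Qed.

Lemma cdes_sub_node l cs :
  cdes_sub l (LNode cs) = cdes (l :: map fst cs) + \sum_(p <- cs) cdes_sub p.1 p.2.
Proof.
rewrite /=; congr (_ + _).
by elim: cs => [|[l' c] cs IH] /=; rewrite ?big_nil // big_cons IH.
Qed.

Lemma cdes_sub_contour l T : cdes_sub l T = cdes (l :: contour T).
Proof.
rewrite cdes_cons; move: T l.
apply: (@ltree_forest_ind
  (fun T => forall l, cdes_sub l T = path_des l (rcons (contour T) l))
  (fun cs => forall x l, path_des x (rcons (contour (LNode cs)) l) =
     path_des x (rcons (map fst cs) l) + \sum_(p <- cs) cdes_sub p.1 p.2)).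
- by move=> x l; rewrite big_nil addn0.
- move=> a c cs IHc IHcs x l.
  rewrite contour_cons big_cons /= rcons_cat /= path_des_cat /= IHc IHcs.
  rewrite -!cats1 !path_des_cat /=; lia.
- by move=> cs IH l; rewrite cdes_sub_node cdes_cons IH.
Qed.

Definition cycle_sub (n l x : nat) : nat := if l < x then x - l else x + n - l.
Definition cycle_add (n l y : nat) : nat := if y + l <= n then y + l else y + l - n.

Definition cdist (n a b : nat) : nat := if b < a then b + n - a else b - a.

Fixpoint cdist_sum (n x : nat) (s : seq nat) : nat :=
  if s is y :: s' then cdist n x y + cdist_sum n y s' else 0.

Section CyclicShift.
Variables n l : nat.
Hypothesis l_range : l \in iota 1 n.

Ltac case_ifs_lia :=
  move: l_range; rewrite ?mem_iota /cycle_sub /cycle_add /cdist; repeat case: ifP => ?; lia.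

Lemma cycle_sub_iota : {homo cycle_sub n l : x / x \in iota 1 n}.
Proof. move=> x; case_ifs_lia. Qed.

Lemma cycle_add_iota : {homo cycle_add n l : y / y \in iota 1 n}.
Proof. move=> y; case_ifs_lia. Qed.

Lemma cycle_subK : {in iota 1 n, cancel (cycle_sub n l) (cycle_add n l)}.
Proof. move=> x; rewrite /cycle_sub; case: ifP => ?; case_ifs_lia. Qed.

Lemma cycle_addK : {in iota 1 n, cancel (cycle_add n l) (cycle_sub n l)}.
Proof. move=> y; rewrite /cycle_add; case: ifP => ?; case_ifs_lia. Qed.

Lemma cycle_sub_id : cycle_sub n l l = n.
Proof. case_ifs_lia. Qed.

Lemma cdist_cycle_sub : {in iota 1 n &, forall a b,
  cdist n (cycle_sub n l a) (cycle_sub n l b) = cdist n a b}.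
Proof. move=> a b; rewrite /cycle_sub; do 2 case: ifP => ?; case_ifs_lia. Qed.

End CyclicShift.

(* Each step of the walk adds [n] to the distance exactly at a descent. *)
Lemma cdist_sum_telescope n x s : all (fun y => y <= n) (x :: s) ->
  cdist_sum n x s + x = last x s + n * path_des x s.
Proof.
elim: s x => [|y s IH] x /=; first lia.
move=> /and3P [x_le y_le s_le]; have := IH y; rewrite /= y_le s_le => /(_ isT).
rewrite /cdist; case: ltnP; rewrite mulnDr; lia.
Qed.

Lemma cdes_cdist_sum n x s : all (fun y => y <= n) (x :: s) ->
  n * cdes (x :: s) = cdist_sum n x (rcons s x).
Proof.
move=> s_le; rewrite cdes_cons.
have := @cdist_sum_telescope n x (rcons s x); rewrite last_rcons /= all_rcons andbA andbb.
by move=> /(_ s_le); lia.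
Qed.

Lemma cdist_sum_cycle_sub (n l x : nat) (s : seq nat) :
  l \in iota 1 n -> {subset x :: s <= iota 1 n} ->
  cdist_sum n (cycle_sub n l x) (map (cycle_sub n l) s) = cdist_sum n x s.
Proof.
move=> l_range; elim: s x => [|y s IH] x //= s_sub.
have x_in : x \in iota 1 n by apply: s_sub; rewrite mem_head.
have y_in : y \in iota 1 n by apply: s_sub; rewrite !inE eqxx orbT.
rewrite cdist_cycle_sub // IH // => z; rewrite inE => /orP [/eqP -> // | z_s].
by apply: s_sub; rewrite !inE z_s !orbT.
Qed.

(* The number of cyclic descents is [1/n] times the total distance travelled
   around the cycle, which a cyclic shift of the values does not change. *)
Lemma cdes_cycle_sub (n l : nat) (s : seq nat) :
  l \in iota 1 n -> {subset s <= iota 1 n} ->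
  cdes (map (cycle_sub n l) s) = cdes s.
Proof.
case: s => [|x s] // l_range s_sub.
have n_gt0 : 0 < n by move: l_range; rewrite mem_iota; lia.
have le_n t : {subset t <= iota 1 n} -> all (fun y => y <= n) t.
  by move=> t_sub; apply/allP => y /t_sub; rewrite mem_iota; lia.
apply/eqP; rewrite map_cons -(eqn_pmul2l n_gt0) !cdes_cdist_sum ?le_n //; last first.
  by rewrite -map_cons => _ /mapP [y /s_sub y_in ->]; apply: cycle_sub_iota.
rewrite -map_rcons cdist_sum_cycle_sub // => y; rewrite inE mem_rcons inE orbA orbb.
by move=> /s_sub.
Qed.

Lemma cdes_max_cons n w : all (fun y => y < n) w -> cdes (n :: w) = des w.
Proof.
rewrite cdes_cons; case: w => [|y w] /=; first by rewrite ltnn.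
move=> /andP [y_lt w_lt]; rewrite y_lt des_cons -cats1 path_des_cat /= add1n.
have : last y w < n by have := mem_last y w; rewrite inE => /orP [/eqP -> | /(allP w_lt)].
by case: ltnP => //; lia.
Qed.

Definition noncrossing (p : seq nat) : Prop :=
  ~ exists i j k l : nat,
      [/\ i < j, j < k, k < l & l < size p] /\
      nth 0 p i = nth 0 p k /\ nth 0 p j = nth 0 p l.

Lemma noncrossing_infix x y z : noncrossing (x ++ y ++ z) -> noncrossing y.
Proof.
move=> nc_xyz [i [j [k [l [[ij jk kl l_lt] [eq_ik eq_jl]]]]]]; apply: nc_xyz.
have nth_shift p : p < size y -> nth 0 (x ++ y ++ z) (size x + p) = nth 0 y p.
  by move=> p_lt; rewrite nth_cat ltnNge leq_addr /= addKn nth_cat p_lt.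
exists (size x + i), (size x + j), (size x + k), (size x + l).
rewrite !nth_shift ?size_cat; try lia; by split; [split; lia|].
Qed.

Lemma noncrossing_map (f : nat -> nat) (s : seq nat) :
  {in s &, injective f} -> noncrossing s -> noncrossing (map f s).
Proof.
move=> f_inj nc_s [i [j [k [l [[ij jk kl l_lt] [eq_ik eq_jl]]]]]]; apply: nc_s.
rewrite size_map in l_lt; have mem_s p : p < size s -> nth 0 s p \in s by apply: mem_nth.
rewrite !(nth_map 0 0) in eq_ik eq_jl; try lia.
exists i, j, k, l; split=> //; split; apply: f_inj => //; apply: mem_s; lia.
Qed.

Section NoncrossingJoin.
Variables (a : nat) (u v : seq nat).
Local Notation w := (a :: u ++ a :: v).
Local Notation m := (size u).

Lemma size_join : size w = m + size v + 2.
Proof. by rewrite /= size_cat /=; lia. Qed.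

Lemma nth_join_mid : nth 0 w m.+1 = a.
Proof. by rewrite /= nth_cat ltnn subnn. Qed.

Lemma nth_join_left p : 0 < p <= m -> nth 0 w p = nth 0 u p.-1.
Proof. by case: p => [|p] //= p_le; rewrite nth_cat p_le. Qed.

Lemma nth_join_right p : m.+2 <= p -> nth 0 w p = nth 0 v (p - m.+2).
Proof. by case: p => [|p] //= p_ge; rewrite nth_cat ltnNge ltnW //= subSS -subnSK. Qed.

Lemma mem_nth_join_left p : 0 < p <= m -> nth 0 w p \in u.
Proof.
by move=> /andP [p_pos p_le]; rewrite nth_join_left ?p_pos // mem_nth // prednK.
Qed.

Lemma mem_nth_join_right p : m.+2 <= p < size w -> nth 0 w p \in v.
Proof.
rewrite size_join => p_range; have : p - m.+2 < size v by lia.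
by rewrite nth_join_right; [apply: mem_nth | lia].
Qed.

Lemma noncrossing_join_disjoint x : noncrossing w -> x \in u -> x \notin v.
Proof.
move=> nc_w xu; apply/negP => xv; apply: nc_w.
have iu : index x u < m by rewrite index_mem.
have iv : index x v < size v by rewrite index_mem.
exists 0, (index x u).+1, m.+1, (m.+2 + index x v); rewrite size_join.
rewrite nth_join_mid (@nth_join_left (index x u).+1) //.
rewrite (@nth_join_right (m.+2 + _)) ?leq_addr //.
by rewrite addKn !nth_index //; do ?split; lia.
Qed.

Hypotheses (a_notin_u : a \notin u) (a_notin_v : a \notin v).
Hypothesis uv_disjoint : ~~ has (mem u) v.

Lemma nth_join_eq p q : p < q < size w -> nth 0 w p = nth 0 w q ->
  (p = 0 /\ q = m.+1) \/ (0 < p /\ q <= m) \/ m.+2 <= p.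
Proof.
move=> /andP [pq q_lt] eq_pq.
have u_notin_v x : x \in u -> x \notin v.
  by move=> xu; apply: contra uv_disjoint => xv; apply/hasP; exists x.
have in_u r : 0 < r <= m -> nth 0 w r \in u := @mem_nth_join_left r.
have q_in_v : m.+2 <= q -> nth 0 w q \in v by move=> q_ge; apply: mem_nth_join_right; lia.
have [p0|p_pos] := posnP p.
  subst p; have [q_le|q_gt] := leqP q m.
    by move: (in_u q); rewrite -eq_pq (negbTE a_notin_u); lia.
  have [->|q_ne] := eqVneq q m.+1; first by left.
  by move: q_in_v; rewrite -eq_pq (negbTE a_notin_v); lia.
have [p_le|p_gt] := leqP p m.
  have [q_le|q_gt] := leqP q m; first by right; left.
  have p_u : nth 0 w p \in u by apply: in_u; rewrite p_pos p_le.
  have [q_eq|q_ne] := eqVneq q m.+1.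
    by move: p_u; rewrite eq_pq q_eq nth_join_mid (negbTE a_notin_u).
  by move: q_in_v (u_notin_v _ p_u); rewrite -eq_pq; case: (_ \in v) => //; lia.
have [p_eq|p_ne] := eqVneq p m.+1; last by right; right; lia.
by move: q_in_v; rewrite -eq_pq p_eq nth_join_mid (negbTE a_notin_v); lia.
Qed.

Lemma noncrossing_join : noncrossing u -> noncrossing v -> noncrossing w.
Proof.
move=> nc_u nc_v [i [j [k [l [[ij jk kl l_lt] [eq_ik eq_jl]]]]]].
have ik_lt : i < k < size w by apply/andP; split; lia.
have jl_lt : j < l < size w by apply/andP; split; lia.
move: (nth_join_eq ik_lt eq_ik) (nth_join_eq jl_lt eq_jl).
case=> [[i0 k_eq] | [[i_pos k_le] | i_ge]] [[j0 l_eq] | [[j_pos l_le] | j_ge]]; try lia.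
- apply: nc_u; exists i.-1, j.-1, k.-1, l.-1.
  rewrite !nth_join_left in eq_ik eq_jl; try lia; by split; [split; lia|].
- apply: nc_v; exists (i - m.+2), (j - m.+2), (k - m.+2), (l - m.+2).
  move: l_lt; rewrite size_join => l_lt.
  rewrite !nth_join_right in eq_ik eq_jl; try lia; by split; [split; lia|].
Qed.

End NoncrossingJoin.

Lemma noncrossing_contour T : uniq (labels T) -> noncrossing (contour T).
Proof.
move: T; apply: (@ltree_forest_ind (fun T => uniq (labels T) -> noncrossing (contour T))
  (fun cs => uniq (labels (LNode cs)) -> noncrossing (contour (LNode cs)))) => //.
- by move=> _ [i [j [k [l [[_ _ _ l_lt] _]]]]].
- move=> a c cs IHc IHcs; rewrite labels_cons cons_uniq cat_uniq mem_cat negb_or.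
  move=> /andP [/andP [a_c a_cs] /and3P [uniq_c disj uniq_cs]].
  rewrite contour_cons; apply: (noncrossing_join _ _ _ (IHc uniq_c) (IHcs uniq_cs)).
  1,2: by rewrite mem_contour.
  by rewrite (eq_has (mem_contour c)) (eq_has_r (mem_contour _)).
Qed.

Definition contour_word (w : seq nat) : Prop :=
  {in w, forall x, count_mem x w = 2} /\ noncrossing w.

Lemma contour_word_split (a : nat) (u v : seq nat) : a \notin u ->
  contour_word (a :: u ++ a :: v) -> contour_word u /\ contour_word v.
Proof.
move=> a_notin_u [count2 nc_w].
have count_w x :
    count_mem x (a :: u ++ a :: v) = (a == x) * 2 + count_mem x u + count_mem x v.
  by rewrite /= count_cat /=; lia.
have a_notin_v : a \notin v.
  apply/count_memPn; move: (count2 a (mem_head _ _)).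
  by rewrite count_w eqxx (count_memPn a_notin_u); lia.
have mem_w x : x \in u ++ v -> x \in a :: u ++ a :: v.
  by rewrite mem_cat inE mem_cat inE => /orP [] ->; rewrite ?orbT.
have ne_a x (s : seq nat) : a \notin s -> x \in s -> (a == x) = false.
  by move=> a_notin xs; apply: contraNF a_notin => /eqP ->.
split; split.
- move=> x xu; have /count2 : x \in a :: u ++ a :: v by apply: mem_w; rewrite mem_cat xu.
  have xv := noncrossing_join_disjoint nc_w xu.
  by rewrite count_w (ne_a _ _ a_notin_u xu) (count_memPn xv); lia.
- exact: (@noncrossing_infix [:: a] u (a :: v)).
- move=> x xv; have /count2 : x \in a :: u ++ a :: v by apply: mem_w; rewrite mem_cat xv orbT.
  have xu : x \notin u.
    by apply/negP => xu; move: (noncrossing_join_disjoint nc_w xu); rewrite xv.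
  by rewrite count_w (ne_a _ _ a_notin_v xv) (count_memPn xu); lia.
- by apply: (@noncrossing_infix (a :: rcons u a) v [::]); rewrite cats0 /= cat_rcons.
Qed.

Fixpoint parse_forest (fuel : nat) (w : seq nat) : seq (nat * ltree) :=
  if fuel is fuel'.+1 then
    if w is a :: rest then
      let i := index a rest in
      (a, LNode (parse_forest fuel' (take i rest))) :: parse_forest fuel' (drop i.+1 rest)
    else [::]
  else [::].

Lemma size_contour_cons l c cs :
  size (contour (LNode ((l, c) :: cs))) = (size (contour c) + size (contour (LNode cs))).+2.
Proof. by rewrite contour_cons /= size_cat /= addnS. Qed.

Lemma parse_forest_cons fuel a rest :
  parse_forest fuel.+1 (a :: rest) =
  (a, LNode (parse_forest fuel (take (index a rest) rest))) ::
    parse_forest fuel (drop (index a rest).+1 rest).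
Proof. by []. Qed.

Lemma parse_forest_contour fuel cs :
  size (contour (LNode cs)) <= fuel -> uniq (labels (LNode cs)) ->
  parse_forest fuel (contour (LNode cs)) = cs.
Proof.
elim: fuel cs => [|fuel IH] [|[a [cs']] cs] //; rewrite size_contour_cons => size_le.
rewrite labels_cons cons_uniq cat_uniq mem_cat negb_or.
move=> /andP [/andP [a_cs' a_cs] /and3P [uniq_cs' _ uniq_cs]].
rewrite contour_cons parse_forest_cons index_cat mem_contour (negbTE a_cs') index_head.
rewrite addn0 take_size_cat // -cat_rcons -(size_rcons _ a) drop_size_cat //.
by rewrite !IH //; lia.
Qed.

Lemma contour_parse_forest fuel w : size w <= fuel -> contour_word w ->
  contour (LNode (parse_forest fuel w)) = w.
Proof.
elim: fuel w => [|fuel IH] [|a rest] // size_le cw.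
have a_rest : a \in rest.
  case: cw => /(_ a (mem_head _ _)) /= count2 _.
  by rewrite -has_pred1 has_count; move: count2; rewrite eqxx /=; lia.
set u := take (index a rest) rest; set v := drop (index a rest).+1 rest.
have rest_uv : rest = u ++ a :: v by rewrite /u /v -drop_index // cat_take_drop.
have a_notin_u : a \notin u by rewrite /u in_take // ltnn.
rewrite rest_uv in cw size_le; have [cw_u cw_v] := contour_word_split a_notin_u cw.
rewrite parse_forest_cons -/u -/v contour_cons !IH // ?rest_uv //.
all: by move: size_le; rewrite /= size_cat /=; lia.
Qed.

Definition parse_tree (w : seq nat) : ltree := LNode (parse_forest (size w) w).

Lemma contourK T : uniq (labels T) -> parse_tree (contour T) = T.
Proof. by case: T => cs uniq_cs; rewrite /parse_tree parse_forest_contour. Qed.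

Lemma parse_treeK w : contour_word w -> contour (parse_tree w) = w.
Proof. exact: contour_parse_forest. Qed.

Lemma map_doubled (f : nat -> nat) s : map f (doubled s) = doubled (map f s).
Proof. by elim: s => //= x s ->. Qed.

Lemma perm_contour_map_doubled f T s :
  perm_eq (map f (labels T)) s -> perm_eq (map f (contour T)) (doubled s).
Proof.
move=> /permP count_eq; apply/permP => p.
by rewrite count_map count_contour -count_map count_eq count_doubled.
Qed.

Lemma perm_labels_contour_doubled T s :
  perm_eq (contour T) (doubled s) -> perm_eq (labels T) s.
Proof.
move=> /permP count_eq; apply/permP => p; apply/eqP.
by rewrite -(eqn_pmul2l (isT : 0 < 2)) -count_contour -count_doubled count_eq.
Qed.

Lemma contour_word_doubled w s :
  uniq s -> perm_eq w (doubled s) -> noncrossing w -> contour_word w.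
Proof.
move=> uniq_s perm_w nc_w; split=> // x xw.
move: xw; rewrite -has_pred1 has_count (permP perm_w) count_doubled.
by rewrite (count_uniq_mem _ uniq_s); case: (x \in s).
Qed.

Lemma perm_map_iota (f : nat -> nat) n :
  {in iota 1 n &, injective f} -> {in iota 1 n, forall x, f x \in iota 1 n} ->
  perm_eq (map f (iota 1 n)) (iota 1 n).
Proof.
move=> f_inj f_range.
have uniq_f : uniq (map f (iota 1 n)) by rewrite map_inj_in_uniq ?iota_uniq.
apply: uniq_perm; rewrite ?iota_uniq //; apply: (uniq_min_size uniq_f _ _).2.
- by move=> _ /mapP [x x_in ->]; apply: f_range.
- by rewrite size_map.
Qed.

Definition tree_word (n : nat) (T : ltree) : nat * seq nat :=
  if T is LNode [:: (l, c)] then (l, map (cycle_sub n l) (contour c)) else (0, [::]).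

Lemma tree_wordE n l c :
  tree_word n (LNode [:: (l, c)]) = (l, map (cycle_sub n l) (contour c)).
Proof. by []. Qed.

Definition word_tree (n : nat) (lw : nat * seq nat) : ltree :=
  LNode [:: (lw.1, parse_tree (map (cycle_add n lw.1) lw.2))].

Lemma iotaS_rcons m : iota 1 m.+1 = rcons (iota 1 m) m.+1.
Proof. by rewrite -cats1 -{1}(addn1 m) iotaD. Qed.

Section RootShift.
Variables (m l : nat).
Local Notation n := m.+1.
Hypothesis l_range : l \in iota 1 n.

Lemma perm_map_cycle_sub_iota : perm_eq (map (cycle_sub n l) (iota 1 n)) (n :: iota 1 m).
Proof.
rewrite perm_sym -perm_rcons -iotaS_rcons perm_sym.
rewrite perm_map_iota //; last exact: cycle_sub_iota.
exact: can_in_inj (cycle_subK l_range).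
Qed.

Lemma perm_map_cycle_add_iota : perm_eq (map (cycle_add n l) (iota 1 n)) (iota 1 n).
Proof.
rewrite perm_map_iota //; last exact: cycle_add_iota.
exact: can_in_inj (cycle_addK l_range).
Qed.

Lemma perm_root_iota L :
  perm_eq (l :: L) (iota 1 n) <->
  {subset L <= iota 1 n} /\ perm_eq (map (cycle_sub n l) L) (iota 1 m).
Proof.
split=> [perm_L | [L_sub perm_L]].
  split=> [x xL|]; first by rewrite -(perm_mem perm_L) inE xL orbT.
  have := perm_map (cycle_sub n l) perm_L; rewrite map_cons cycle_sub_id // => perm_sub.
  by rewrite -(perm_cons n) (perm_trans perm_sub) ?perm_map_cycle_sub_iota.
have <- : map (cycle_add n l) (n :: map (cycle_sub n l) L) = l :: L.
  have add_n : cycle_add n l n = l by rewrite -{2}(cycle_sub_id l_range) cycle_subK.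
  rewrite map_cons add_n -map_comp map_id_in // => x xL.
  exact: cycle_subK (L_sub x xL).
apply: (perm_trans _ perm_map_cycle_add_iota); apply: perm_map.
by rewrite iotaS_rcons perm_sym perm_rcons perm_cons perm_sym.
Qed.
End RootShift.

Lemma labels_root l c : labels (LNode [:: (l, c)]) = l :: labels c.
Proof. by rewrite /= cats0. Qed.

Section TreeToWord.
Variables (m l : nat) (c : ltree).
Local Notation n := m.+1.
Local Notation w := (map (cycle_sub n l) (contour c)).
Hypothesis T_labels : inT n (LNode [:: (l, c)]).

Lemma root_labels : perm_eq (l :: labels c) (iota 1 n).
Proof. by rewrite -labels_root. Qed.

Lemma root_label_iota : l \in iota 1 n.
Proof. by rewrite -(perm_mem root_labels) mem_head. Qed.

Lemma uniq_subtree_labels : uniq (labels c).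
Proof. by have := perm_uniq root_labels; rewrite iota_uniq => /andP []. Qed.

Lemma labels_sub_iota : {subset labels c <= iota 1 n}.
Proof. exact: ((perm_root_iota root_label_iota _).1 root_labels).1. Qed.

Lemma perm_cycle_sub_labels : perm_eq (map (cycle_sub n l) (labels c)) (iota 1 m).
Proof. exact: ((perm_root_iota root_label_iota _).1 root_labels).2. Qed.

Lemma contour_sub_iota : {subset contour c <= iota 1 n}.
Proof. by move=> x; rewrite mem_contour; apply: labels_sub_iota. Qed.

Lemma tree_word_quasi_stirling : quasi_stirling m w.
Proof.
split; first exact: perm_contour_map_doubled perm_cycle_sub_labels.
apply: noncrossing_map (noncrossing_contour uniq_subtree_labels).
have sub_inj := can_in_inj (cycle_subK root_label_iota).
by move=> x y /contour_sub_iota x_in /contour_sub_iota y_in; apply: sub_inj.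
Qed.

Lemma cdes_tree_word : cdes_tree (LNode [:: (l, c)]) - 1 = des w.
Proof.
rewrite /cdes_tree big_seq1 /= add1n subSS subn0 cdes_sub_contour.
rewrite -(cdes_cycle_sub root_label_iota); last first.
  by move=> x; rewrite inE => /orP [/eqP -> | /contour_sub_iota]; rewrite ?root_label_iota.
rewrite map_cons cycle_sub_id ?root_label_iota // cdes_max_cons //.
apply/allP => y; rewrite (perm_mem (perm_contour_map_doubled perm_cycle_sub_labels)).
by rewrite mem_doubled mem_iota add1n => /andP [].
Qed.

Lemma tree_word_rootK : word_tree n (tree_word n (LNode [:: (l, c)])) = LNode [:: (l, c)].
Proof.
rewrite /word_tree /= -map_comp map_id_in ?contourK ?uniq_subtree_labels //.
move=> x /contour_sub_iota.
exact: (cycle_subK root_label_iota).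
Qed.
End TreeToWord.

Lemma iota_subS m : {subset iota 1 m <= iota 1 m.+1}.
Proof. by move=> x; rewrite iotaS_rcons mem_rcons inE => ->; rewrite orbT. Qed.

Section WordToTree.
Variables (m l : nat) (w : seq nat).
Local Notation n := m.+1.
Local Notation w' := (map (cycle_add n l) w).
Hypotheses (l_range : l \in iota 1 n) (w_qs : quasi_stirling m w).

Lemma perm_word_doubled : perm_eq w (doubled (iota 1 m)).
Proof. exact: w_qs.1. Qed.

Lemma word_sub_iota : {subset w <= iota 1 n}.
Proof. by move=> y; rewrite (perm_mem perm_word_doubled) mem_doubled => /iota_subS. Qed.

Lemma cycle_add_inj : {in iota 1 n &, injective (cycle_add n l)}.
Proof. exact: can_in_inj (cycle_addK l_range). Qed.

Lemma contour_word_shifted : contour_word w'.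
Proof.
apply: (@contour_word_doubled _ (map (cycle_add n l) (iota 1 m))).
- rewrite map_inj_in_uniq ?iota_uniq // => x y /iota_subS x_in /iota_subS y_in.
  exact: cycle_add_inj.
- by rewrite -map_doubled perm_map ?perm_word_doubled.
apply: noncrossing_map w_qs.2.
by move=> x y /word_sub_iota x_in /word_sub_iota y_in; apply: cycle_add_inj.
Qed.

Lemma word_tree_inT' : inT' n (word_tree n (l, w)).
Proof.
split; last by exists l, (parse_tree w').
rewrite /inT labels_root (perm_root_iota l_range).
have perm_c : perm_eq (labels (parse_tree w')) (map (cycle_add n l) (iota 1 m)).
  apply: perm_labels_contour_doubled.
  by rewrite (parse_treeK contour_word_shifted) -map_doubled perm_map ?perm_word_doubled.
split=> [x | ].
  by rewrite (perm_mem perm_c) => /mapP [y /iota_subS y_in ->]; apply: cycle_add_iota.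
rewrite (perm_trans (perm_map _ perm_c)) // -map_comp map_id_in // => y /iota_subS.
exact: cycle_addK.
Qed.

Lemma word_treeK : tree_word n (word_tree n (l, w)) = (l, w).
Proof.
rewrite tree_wordE (parse_treeK contour_word_shifted) -map_comp map_id_in //.
move=> y /word_sub_iota.
exact: cycle_addK.
Qed.
End WordToTree.

Lemma tree_word_spec m T : inT' m.+1 T ->
  [/\ (tree_word m.+1 T).1 \in iota 1 m.+1, quasi_stirling m (tree_word m.+1 T).2,
      cdes_tree T - 1 = des (tree_word m.+1 T).2
    & word_tree m.+1 (tree_word m.+1 T) = T].
Proof.
case=> T_labels [l [c T_eq]]; subst T; split.
- exact: root_label_iota T_labels.
- exact: tree_word_quasi_stirling T_labels.
- exact: cdes_tree_word T_labels.
- exact: tree_word_rootK T_labels.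
Qed.

Lemma In_mem (T : eqType) (x : T) (s : seq T) : List.In x s <-> x \in s.
Proof.
elim: s => //= y s IH; rewrite inE; split=> [[-> | /IH ->] | /orP [/eqP -> | /IH]].
- by rewrite eqxx.
- by rewrite orbT.
- by left.
- by right.
Qed.

Lemma mem_map_In (A : Type) (B : eqType) (f : A -> B) (s : seq A) y :
  y \in map f s <-> exists2 x, List.In x s & y = f x.
Proof.
elim: s y => [|x s IH] y /=; first by split=> // -[].
rewrite inE; split=> [/orP [/eqP -> | /IH [z z_s ->]] | [z [<- | z_s] ->]].
- by exists x; first left.
- by exists z; first right.
- by rewrite eqxx.
- by apply/orP; right; apply/(IH (f z)); exists z.
Qed.

Lemma uniq_map_NoDup (A : Type) (B : eqType) (f : A -> B) (s : seq A) :
  List.NoDup s -> (forall x y, List.In x s -> List.In y s -> f x = f y -> x = y) ->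
  uniq (map f s).
Proof.
elim=> //= x s' x_notin _ IH f_inj.
rewrite IH => [|y z y_in z_in]; last by apply: f_inj; right.
rewrite andbT; apply/negP => /mem_map_In [y y_in eq_xy].
by apply: x_notin; rewrite (f_inj x y) //; [left | right].
Qed.

Lemma NoDup_uniq (T : eqType) (s : seq T) : List.NoDup s -> uniq s.
Proof.
move=> nodup_s; rewrite -(map_id s); apply: uniq_map_NoDup nodup_s _.
by move=> x y _ _.
Qed.

Lemma eq_big_In (R : Type) (idx : R) (op : R -> R -> R) (A : Type) (s : seq A)
    (F G : A -> R) :
  (forall x, List.In x s -> F x = G x) ->
  \big[op/idx]_(x <- s) F x = \big[op/idx]_(x <- s) G x.
Proof.
elim: s => [|x s IH] eqFG; first by rewrite !big_nil.
rewrite !big_cons eqFG /=; last by left.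
by rewrite IH // => y y_s; apply: eqFG; right.
Qed.

Local Open Scope ring_scope.

Section Enumerations.
Variables (m : nat) (s : seq ltree) (q : seq (seq nat)).
Hypotheses (nodup_s : List.NoDup s) (s_trees : forall T, List.In T s <-> inT' m.+1 T).
Hypotheses (nodup_q : List.NoDup q)
  (q_words : forall w, List.In w q <-> quasi_stirling m w).

Lemma perm_tree_words :
  perm_eq (map (tree_word m.+1) s) [seq (l, w) | l <- iota 1 m.+1, w <- q].
Proof.
apply: uniq_perm.
- apply: uniq_map_NoDup nodup_s _ => T1 T2 /s_trees T1_tree /s_trees T2_tree eq_words.
  have [_ _ _ <-] := tree_word_spec T1_tree.
  by rewrite eq_words; case: (tree_word_spec T2_tree).
- by apply: allpairs_uniq; [exact: iota_uniq | exact: NoDup_uniq | move=> [? ?] [? ?] _ _].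
move=> [l w]; apply/idP/allpairsP.
  move=> /mem_map_In [T /s_trees T_tree ->].
  have [] := tree_word_spec T_tree; case: (tree_word m.+1 T) => l' w' /= l_in w_qs _ _.
  by exists (l', w'); split=> //; apply/In_mem/q_words.
move=> [[l' w'] [/= l_in w_in [-> ->]]].
have w_qs : quasi_stirling m w' by apply/q_words/In_mem.
apply/mem_map_In; exists (word_tree m.+1 (l', w')); last by rewrite word_treeK.
exact/s_trees/word_tree_inT'.
Qed.

Lemma Rpoly_Qpoly : Rpoly s = Qpoly q *+ m.+1.
Proof.
have -> : Rpoly s = \sum_(p <- map (tree_word m.+1) s) 'X^(des p.2).
  rewrite big_map; apply: eq_big_In => T /s_trees T_tree.
  by have [_ _ -> _] := tree_word_spec T_tree.
rewrite (perm_big _ perm_tree_words) big_allpairs (eq_bigr (fun=> Qpoly q)) //.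
by rewrite -[iota 1 m.+1]/(index_iota 1 m.+2) sumr_const_nat subSS subn0.
Qed.
End Enumerations.

Unset Implicit Arguments.

Theorem lemma2p4 (n : nat) (s : seq ltree) (q : seq (seq nat)) :
  (1 <= n)%N ->
  List.NoDup s -> (forall T, List.In T s <-> inT' n T) ->
  List.NoDup q -> (forall p, List.In p q <-> quasi_stirling n.-1 p) ->
  (n`!%:R : rat)^-1 *: Rpoly s = ((n.-1)`!%:R : rat)^-1 *: Qpoly q.
Proof.
case: n => // m _ nodup_s s_trees nodup_q q_words.
rewrite (Rpoly_Qpoly nodup_s s_trees nodup_q q_words) -scaler_nat scalerA factS natrM.
by rewrite invfM mulrAC mulVf ?mul1r // Num.Theory.pnatr_eq0.
Qed.
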